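(* Let $q\ge 2$, $n\ge 1$, $f:\mathbb{Z}_q^n\to\mathbb{R}$, let $M$ be the $q$-ary Möbius transform of $f$, let $v$ be the associated value function and $a(v,\cdot)$ its set Möbius transform. Then for every $S\subseteq D$, $$a(v,S)\;=\;(-1)^{|S|}\sum_{\substack{\mathbf{k}\in\mathbb{Z}_q^n\\ k_j\neq 0\ \forall j\in S}} \frac{1}{q^{\|\mathbf{k}\|_0}}\,M[\mathbf{k}].$$
   Context: Elements of $\mathbb{Z}_q^n$ are vectors $\mathbf{m}=(m_1,\dots,m_n)$ with $m_i\in\{0,1,\dots,q-1\}$. $D=\{1,\dots,n\}$, and for $T\subseteq D$, $\bar T=D\setminus T$. $\|\mathbf{k}\|_0$ is the number of nonzero coordinates of $\mathbf{k}$. Partial order: $\mathbf{m}\le\mathbf{k}$ iff for every $i$, $m_i=k_i$ or $m_i=0$; in that case $\mathbf{k}-\mathbf{m}$ is the coordinatewise integer difference. The $q$-ary Möbius transform of $f$ is $M[\mathbf{k}]=\sum_{\mathbf{m}\le\mathbf{k}}(-1)^{\|\mathbf{k}-\mathbf{m}\|_0} f(\mathbf{m})$. The value function (query encoded as the all-zeros vector, uniform marginalization of absent features) is $v_T=\frac{1}{q^{|\bar T|}}\sum_{\mathbf{r}\in\mathbb{Z}_q^n:\ \mathbf{r}_T=\mathbf{0}} f(\mathbf{r})$ for $T\subseteq D$. The set Möbius transform of $v$ is $a(v,S)=\sum_{T\subseteq S}(-1)^{|S|-|T|}v_T$ for $S\subseteq D$. *)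

From mathcomp Require Import all_boot all_order all_algebra.
Set Implicit Arguments. Unset Strict Implicit. Unset Printing Implicit Defensive.
Import Order.TTheory GRing.Theory Num.Theory.
Local Open Scope ring_scope.

(* Elements of Z_q^n : finite functions 'I_n -> 'I_q (coordinate values 0..q-1).
   Coordinate index set D = {1..n} is represented by 'I_n (0-based). *)
Definition vec (q n : nat) := {ffun 'I_n -> 'I_q}.

Definition l0 (q n : nat) (k : vec q n) : nat := #|[set i | (k i : nat) != 0%N]|.

Definition vle (q n : nat) (m k : vec q n) : bool :=
  [forall i, (m i == k i) || ((m i : nat) == 0%N)].

Definition l0diff (q n : nat) (k m : vec q n) : nat :=
  #|[set i | (k i : nat) != (m i : nat)]|.

Definition qmobius (R : ringType) (q n : nat) (f : vec q n -> R) (k : vec q n) : R :=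
  \sum_(m : vec q n | vle m k) (-1) ^+ l0diff k m * f m.

Definition valfun (R : fieldType) (q n : nat) (f : vec q n -> R) (T : {set 'I_n}) : R :=
  (q%:R ^+ #|~: T|)^-1 * \sum_(r : vec q n | [forall i in T, (r i : nat) == 0%N]) f r.

Definition setmobius (R : ringType) (n : nat) (v : {set 'I_n} -> R) (S : {set 'I_n}) : R :=
  \sum_(T : {set 'I_n} | T \subset S) (-1) ^+ (#|S| - #|T|) * v T.

(* Both sides are linear in [f], so it suffices to compare the coefficients of
   each [f m].  On either side this coefficient factorises over the coordinates
   into [(-1)^|S| * prod_i (1/q - [i in S and m_i = 0])]: on the left because
   the sum over [T ⊆ S] with [m_T = 0] is the expansion of that product, on the
   right because the sum over the [k >= m] with [k_S ≠ 0] is a product of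
   one-coordinate sums, each of which equals the same factor since
   [(q - 1)/q = 1 - 1/q]. *)
From mathcomp Require Import all_boot all_order all_algebra ring.
Import Order.TTheory GRing.Theory Num.Theory.
Local Open Scope ring_scope.

Lemma prodr_nat_bool (R : comPzSemiRingType) (I : finType) (P b : pred I) :
  \prod_(i | P i) (b i)%:R = [forall (i | P i), b i]%:R :> R.
Proof.
have [/forall_inP Hb | /forall_inPn [i Ai /negbTE nbi]] := boolP [forall (i | P i), b i].
  by apply: big1 => i /Hb ->.
by rewrite (bigD1 i) //= nbi mul0r.
Qed.

Lemma prodr_if1 (R : pzSemiRingType) (I : finType) (b : pred I) (x : R) :
  \prod_i (if b i then x else 1) = x ^+ #|b|.
Proof. by rewrite -big_mkcond prodr_const. Qed.

Lemma signr_subn (R : pzRingType) (m n : nat) : (n <= m)%N ->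
  (-1) ^+ (m - n) = (-1) ^+ m * (-1) ^+ n :> R.
Proof. by move=> le_nm; rewrite -signr_odd oddB // signr_addb !signr_odd. Qed.

Section CoordinateWeights.

Variables (R : comPzRingType) (q n : nat) (c : R) (S : {set 'I_n}).

Definition coord_weight (i : 'I_n) (x : 'I_q) : R :=
  c - ((i \in S) && ((x : nat) == 0%N))%:R.

Lemma setmobius_weight_prod (r : vec q n) :
  \sum_(T : {set 'I_n} | (T \subset S) && [forall i in T, (r i : nat) == 0%N])
     (-1) ^+ (#|S| - #|T|) * c ^+ #|~: T|
  = (-1) ^+ #|S| * \prod_i coord_weight i (r i).
Proof.
rewrite /coord_weight; under eq_bigr do rewrite addrC.
rewrite bigA_distr /= mulr_sumr big_mkcond /=; apply: eq_bigr => T _.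
rewrite (bigID (mem T)) /=.
rewrite [X in _ * (_ * X)](eq_bigr (fun=> c)) => [|i /negbTE -> //].
rewrite (eq_bigr (fun i => - ((i \in S) && ((r i : nat) == 0%N))%:R)) => [|i -> //].
rewrite prodr_const prodrN prodr_nat_bool.
have -> : #|(fun i : 'I_n => i \notin T)| = #|~: T| by apply: eq_card => i; rewrite inE.
have -> : [forall i in T, (i \in S) && ((r i : nat) == 0%N)]
          = (T \subset S) && [forall i in T, (r i : nat) == 0%N].
  apply/forall_inP/andP => [H | [/subsetP TS /forall_inP r0] i Ti].
    by split; [apply/subsetP => i /H /andP[] | apply/forall_inP => i /H /andP[]].
  by rewrite TS // r0.
case: ifP => [/andP[/subset_leq_card leTS _] | _]; last by rewrite mulr0n mulr0 mul0r mulr0.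
by rewrite signr_subn // mulr1; ring.
Qed.

(* The [i]-th factor of the summand [k] in [qmobius_weight_prod], with [x = k_i]. *)
Definition coord_term (i : 'I_n) (mi x : 'I_q) : R :=
  (((i \in S) ==> ((x : nat) != 0%N)) && ((mi == x) || ((mi : nat) == 0%N)))%:R
  * (if (x : nat) != 0%N then c else 1) * (if (x : nat) != mi then -1 else 1).

Hypothesis qc1 : q%:R * c = 1.

Lemma coord_weight_sum (i : 'I_n) (mi : 'I_q) :
  \sum_(x : 'I_q) coord_term i mi x = coord_weight i mi.
Proof.
rewrite /coord_term /coord_weight (bigD1 mi) //= eqxx orTb andbT eqxx mulr1.
have [mi0 | mi_neq0] := eqVneq (mi : nat) 0%N; last first.
  rewrite big1 => [|x /negbTE]; last by rewrite eq_sym orbF => ->; rewrite andbF !mul0r.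
  by rewrite /= implybT andbF subr0 addr0 mul1r.
rewrite (eq_bigr (fun _ => - c)) => [|x mi_neq_x]; last first.
  have x_neq0 : (x : nat) != 0%N.
    by apply: contra mi_neq_x => /eqP x0; apply/eqP/val_inj; rewrite /= x0.
  by rewrite x_neq0 implybT orbT (_ : (x : nat) != mi = true) // mul1r mulrN1.
rewrite sumr_const cardC1 card_ord mulNrn -[c *+ _]mulr_natl.
have -> : q.-1%:R * c = 1 - c :> R.
  have q_pos := leq_ltn_trans (leq0n mi) (ltn_ord mi).
  by rewrite -[in RHS]qc1 -[in RHS](prednK q_pos) -natr1 mulrDl mul1r addrK.
by case: (i \in S); rewrite /= ?mul0r ?mul1r; ring.
Qed.

Lemma qmobius_weight_prod (m : vec q n) :
  \sum_(k : vec q n | [forall j in S, (k j : nat) != 0%N] && vle m k)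
     c ^+ l0 k * (-1) ^+ l0diff k m
  = \prod_i coord_weight i (m i).
Proof.
under [RHS]eq_bigr do rewrite -coord_weight_sum.
rewrite bigA_distr_bigA big_mkcond /=; apply: eq_bigr => k _.
rewrite /coord_term !big_split /= prodr_nat_bool !prodr_if1.
have -> : [forall i, ((i \in S) ==> ((k i : nat) != 0%N))
                     && ((m i == k i) || ((m i : nat) == 0%N))]
          = [forall j in S, (k j : nat) != 0%N] && vle m k.
  apply/forallP/andP => [H | [/forall_inP kS /forallP mk] i].
    split; first by apply/forall_inP => j jS; case/andP: (H j) => /implyP ->.
    by apply/forallP => i; case/andP: (H i).
  by rewrite mk andbT; apply/implyP/kS.
case: ifP => _; last by rewrite mulr0n !mul0r.
rewrite mul1r /l0 /l0diff.
by congr (c ^+ _ * _ ^+ _); apply: eq_card => i; rewrite inE.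
Qed.

End CoordinateWeights.

Lemma setmobius_valfunE (R : fieldType) (q n : nat) (f : vec q n -> R) (S : {set 'I_n}) :
  setmobius (valfun f) S
  = \sum_(r : vec q n) f r *
      \sum_(T : {set 'I_n} | (T \subset S) && [forall i in T, (r i : nat) == 0%N])
         (-1) ^+ (#|S| - #|T|) * (q%:R^-1) ^+ #|~: T|.
Proof.
rewrite /setmobius /valfun.
transitivity (\sum_(T : {set 'I_n}) \sum_(r : vec q n)
   if (T \subset S) && [forall i in T, (r i : nat) == 0%N]
   then f r * ((-1) ^+ (#|S| - #|T|) * (q%:R^-1) ^+ #|~: T|) else 0).
  rewrite big_mkcond; apply: eq_bigr => T _; case: (T \subset S) => /=; last first.
    by rewrite big1.
  rewrite exprVn mulrA mulr_sumr big_mkcond; apply: eq_bigr => r _.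
  by case: ifP => _; rewrite ?mulr0 // mulrC.
rewrite exchange_big /=; apply: eq_bigr => r _.
by rewrite mulr_sumr [RHS]big_mkcond.
Qed.

Lemma sum_qmobiusE (R : comNzRingType) (q n : nat) (f : vec q n -> R)
    (P : pred (vec q n)) (g : vec q n -> R) :
  \sum_(k | P k) g k * qmobius f k
  = \sum_(m : vec q n) f m * \sum_(k | P k && vle m k) g k * (-1) ^+ l0diff k m.
Proof.
rewrite /qmobius.
transitivity (\sum_(k : vec q n) \sum_(m : vec q n)
   if P k && vle m k then f m * (g k * (-1) ^+ l0diff k m) else 0).
  rewrite big_mkcond; apply: eq_bigr => k _; case: (P k) => /=; last by rewrite big1.
  rewrite mulr_sumr big_mkcond; apply: eq_bigr => m _.
  by case: ifP => _; rewrite // [RHS]mulrC mulrA.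
rewrite exchange_big /=; apply: eq_bigr => m _.
by rewrite mulr_sumr [RHS]big_mkcond.
Qed.

Theorem theorem2 (R : realFieldType) (q n : nat) (hq : (2 <= q)%N) (hn : (1 <= n)%N)
  (f : vec q n -> R) (S : {set 'I_n}) :
  setmobius (valfun f) S =
  (-1) ^+ #|S| *
    \sum_(k : vec q n | [forall j in S, (k j : nat) != 0%N])
       (q%:R ^+ l0 k)^-1 * qmobius f k.
Proof.
have qVq : q%:R * q%:R^-1 = 1 :> R.
  by rewrite mulfV // pnatr_eq0 -lt0n (leq_trans _ hq).
under [in RHS]eq_bigr do rewrite -exprVn.
rewrite setmobius_valfunE sum_qmobiusE mulr_sumr; apply: eq_bigr => m _.
by rewrite setmobius_weight_prod qmobius_weight_prod // mulrCA.
Qed.
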